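(* Let $n\ge1$ be odd and $(\rho_i)_{i=0}^n$ a sequence in $\mathbb F$. The following are equivalent: (i) $(\rho_i)$ is constrained; (ii) the sequences $\rho_0,\rho_2,\ldots,\rho_{n-1}$ and $\rho_n^{-1},\rho_{n-2}^{-1},\ldots,\rho_1^{-1}$ are equal and geometric; (iii) there exist nonzero $s,\xi\in\mathbb F$ such that $\rho_i=\xi s^{i/2}$ for $i$ even and $\rho_i=\xi^{-1}s^{(i-n)/2}$ for $i$ odd ($0\le i\le n$). If these hold then $s=\rho_i/\rho_{i-2}$ for $2\le i\le n$ and $\xi=\rho_0$.
   Context: A sequence $(\rho_i)_{i=0}^n$ of scalars in a field $\mathbb F$ is constrained if (i) $\rho_i\rho_{n-i}=1$ for $0\le i\le n$, and (ii) there exist $a,b,c\in\mathbb F$, not all zero, with $a\rho_{i-1}+b\rho_i+c\rho_{i+1}=0$ for $1\le i\le n-1$. A sequence is geometric if all its terms are nonzero and the ratio of consecutive terms is constant. *)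

From HB Require Import structures.
From mathcomp Require Import all_boot all_order all_algebra.
Set Implicit Arguments. Unset Strict Implicit. Unset Printing Implicit Defensive.
Import Order.TTheory GRing.Theory Num.Theory.
Local Open Scope ring_scope.

(* A finite sequence (rho_i)_{i=0}^n is modelled by rho : nat -> F,
   only the values at 0..n being relevant. *)

Definition constrained (F : fieldType) (n : nat) (rho : nat -> F) : Prop :=
  (forall i : nat, (i <= n)%N -> rho i * rho (n - i)%N = 1) /\
  (exists a b c : F, ~ (a = 0 /\ b = 0 /\ c = 0) /\
     forall i : nat, (1 <= i)%N -> (i <= n - 1)%N ->
       a * rho (i - 1)%N + b * rho i + c * rho i.+1 = 0).

Definition geometric (F : fieldType) (s : seq F) : Prop :=
  (forall i : nat, (i < size s)%N -> s`_i != 0) /\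
  (exists r : F, forall i : nat, (i.+1 < size s)%N -> s`_i.+1 / s`_i = r).

(* The condition rho_i rho_(n-i) = 1 makes rho_i nonzero, and reading the
   three-term recurrence at n - i and inverting gives a second recurrence with
   the roles of a and c swapped; when b != 0 the two combine into
   rho_j^2 = rho_(j-1) rho_(j+1), so rho is geometric, and when b = 0 the
   recurrence itself says rho_(i+1) = (-a/c) rho_(i-1).  Either way
   rho_i = s rho_(i-2) for a fixed s, which together with rho_i rho_(n-i) = 1
   and n odd pins down rho_i = rho_0 s^(i/2) for even i and
   rho_i = rho_0^-1 s^-((n-i)/2) for odd i.  Conversely such a sequence
   satisfies s rho_(i-1) - rho_(i+1) = 0.  Condition (ii) is the same data read
   off the even-indexed terms. *)
From HB Require Import structures.
From mathcomp Require Import all_boot all_order all_algebra.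
From mathcomp Require Import zify ring.

Set Implicit Arguments.
Unset Strict Implicit.
Unset Printing Implicit Defensive.
Import Order.TTheory GRing.Theory Num.Theory.
Local Open Scope ring_scope.

Section ParityGeometric.

Variables (F : fieldType) (n : nat) (rho : nat -> F).

Definition reciprocal : Prop :=
  forall i, (i <= n)%N -> rho i * rho (n - i)%N = 1.

Definition two_step (s : F) : Prop :=
  forall i, (2 <= i)%N -> (i <= n)%N -> rho i = s * rho (i - 2)%N.

Definition parity_geometric (s xi : F) : Prop :=
  forall i, (i <= n)%N ->
    rho i = if ~~ odd i then xi * s ^+ (i %/ 2) else xi^-1 * s ^- ((n - i) %/ 2).

Definition even_terms : seq F := mkseq (fun k => rho (2 * k)%N) (n.+1 %/ 2).

Definition odd_terms_inv : seq F :=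
  mkseq (fun k => (rho (n - 2 * k)%N)^-1) (n.+1 %/ 2).

Lemma reciprocal_neq0 i : reciprocal -> (i <= n)%N -> rho i != 0.
Proof.
move=> rec le_in; apply/eqP=> rho_i0.
by have := rec i le_in; rewrite rho_i0 mul0r => /eqP; rewrite eq_sym oner_eq0.
Qed.

Lemma reciprocalV i : reciprocal -> (i <= n)%N -> rho (n - i)%N = (rho i)^-1.
Proof.
move=> rec le_in; apply: (mulfI (reciprocal_neq0 rec le_in)).
by rewrite rec // divff // reciprocal_neq0.
Qed.

Hypothesis n_odd : odd n.

Lemma reciprocal_parity_geometric s xi : reciprocal ->
    (forall k, (2 * k <= n)%N -> rho (2 * k)%N = xi * s ^+ k) ->
  parity_geometric s xi.
Proof.
move=> rec rho_even i le_in; case: ifP => i_even.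
  have -> : i = (2 * (i %/ 2))%N by lia.
  by rewrite rho_even; [congr (_ * _ ^+ _); lia | lia].
have -> : rho i = (rho (n - i)%N)^-1 by rewrite reciprocalV ?invrK.
have -> : (n - i = 2 * ((n - i) %/ 2))%N by lia.
rewrite rho_even; last by lia.
by rewrite invfM; congr (_ * _ ^- _); lia.
Qed.

Section ClosedForm.

Variables (s xi : F).
Hypotheses (s_neq0 : s != 0) (xi_neq0 : xi != 0).
Hypothesis rhoE : parity_geometric s xi.

Lemma parity_geometric_neq0 i : (i <= n)%N -> rho i != 0.
Proof.
by move=> le_in; rewrite rhoE //; case: ifP; rewrite mulf_neq0 ?invr_neq0 ?expf_neq0.
Qed.

Lemma parity_geometric_reciprocal : reciprocal.
Proof.
move=> i le_in; rewrite rhoE // rhoE; last by lia.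
have -> : odd (n - i) = ~~ odd i by lia.
have -> : (n - (n - i) = i)%N by lia.
by case: ifP => _ /=; field; rewrite ?expf_neq0 ?s_neq0 ?xi_neq0.
Qed.

Lemma parity_geometric_two_step : two_step s.
Proof.
move=> i le_2i le_in; rewrite rhoE // [rho (i - 2)%N]rhoE; last by lia.
have -> : odd (i - 2) = odd i by lia.
case: ifP => i_even.
  have -> : (i %/ 2 = ((i - 2) %/ 2).+1)%N by lia.
  by rewrite exprS mulrCA.
have -> : ((n - (i - 2)) %/ 2 = ((n - i) %/ 2).+1)%N by lia.
by rewrite exprS invfM; field; rewrite ?expf_neq0 ?s_neq0 ?xi_neq0.
Qed.

Lemma parity_geometric_ratio i : (2 <= i)%N -> (i <= n)%N -> s = rho i / rho (i - 2)%N.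
Proof.
move=> le_2i le_in; rewrite parity_geometric_two_step // mulfK //.
by apply: parity_geometric_neq0; lia.
Qed.

Lemma parity_geometric_constrained : constrained n rho.
Proof.
split; first exact: parity_geometric_reciprocal.
exists s, 0, (-1); split; first by case=> s0; move: s_neq0; rewrite s0 eqxx.
move=> i le_1i le_in1; rewrite (parity_geometric_two_step (i := i.+1)); [|lia|lia].
have -> : (i.+1 - 2 = i - 1)%N by lia.
ring.
Qed.

Lemma parity_geometric_even_terms :
  even_terms = odd_terms_inv /\ geometric even_terms.
Proof.
have rho_even k : (2 * k <= n)%N -> rho (2 * k)%N = xi * s ^+ k.
  by move=> le_2kn; rewrite rhoE // ifT; [congr (_ * _ ^+ _) | ]; lia.
have rho_oddV k : (2 * k <= n)%N -> (rho (n - 2 * k)%N)^-1 = xi * s ^+ k.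
  move=> le_2kn; rewrite rhoE ?ifF; [|lia|lia].
  have -> : ((n - (n - 2 * k)) %/ 2 = k)%N by lia.
  by rewrite invfM !invrK.
split.
  apply: (eq_from_nth (x0 := 0)); rewrite !size_mkseq // => k lt_k.
  by rewrite !nth_mkseq // rho_even ?rho_oddV //; lia.
split=> [k | ].
  by rewrite size_mkseq => lt_k; rewrite nth_mkseq // parity_geometric_neq0; lia.
exists s => k; rewrite size_mkseq => lt_k1; rewrite !nth_mkseq; [|lia|lia].
rewrite !rho_even; [|lia|lia].
by rewrite exprS mulrCA mulfK // mulf_neq0 ?expf_neq0.
Qed.

End ClosedForm.

Lemma even_step_parity_geometric s : reciprocal ->
    (forall k, (2 * k.+1 <= n)%N -> rho (2 * k.+1)%N = s * rho (2 * k)%N) ->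
  parity_geometric s (rho 0%N).
Proof.
move=> rec step; apply: reciprocal_parity_geometric => //.
elim=> [|k IHk] le_2kn; first by rewrite muln0 expr0 mulr1.
by rewrite step // IHk; [rewrite exprS mulrCA | lia].
Qed.

Lemma two_step_parity_geometric s :
  reciprocal -> two_step s -> parity_geometric s (rho 0%N).
Proof.
move=> rec step; apply: even_step_parity_geometric => // k le_2kn.
by rewrite step; [congr (_ * rho _) | | ]; lia.
Qed.

Lemma parity_geometric_rho0 s xi : parity_geometric s xi -> xi = rho 0%N.
Proof. by move=> rhoE; rewrite rhoE //= expr0 mulr1. Qed.

Section Recurrence.

Context {a b c : F}.
Hypothesis recurrence : forall i, (1 <= i)%N -> (i <= n - 1)%N ->
  a * rho (i - 1)%N + b * rho i + c * rho i.+1 = 0.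

Lemma recurrence_b0_two_step : rho 0%N != 0 -> b = 0 -> ~ (a = 0 /\ b = 0 /\ c = 0) ->
  exists s, two_step s.
Proof.
move=> rho0_neq0 b0 abc_neq0.
have [n1 | n_gt1] := leqP n 1; first by exists 0 => i; lia.
have c_neq0 : c != 0.
  apply/eqP=> c0; apply: abc_neq0; do !split=> //.
  have := recurrence (i := 1%N) isT ltac:(lia); rewrite b0 c0 !mul0r !addr0 => /eqP.
  by rewrite mulf_eq0 (negbTE rho0_neq0) orbF => /eqP.
exists (- a / c) => i le_2i le_in.
have := recurrence (i := (i - 1)%N) ltac:(lia) ltac:(lia); rewrite b0 mul0r addr0.
have -> : (i - 1 - 1 = i - 2)%N by lia.
have -> : (i - 1).+1 = i by lia.
move/eqP; rewrite addrC addr_eq0 => /eqP c_rho_i.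
by apply: (mulfI c_neq0); rewrite c_rho_i; field.
Qed.

(* Reading the recurrence at n - j through reciprocity gives
   a/rho_(j+1) + b/rho_j + c/rho_(j-1) = 0; the combination below eliminates
   a and c. *)
Lemma reciprocal_recurrence_sqr : reciprocal -> b != 0 ->
  forall j, (1 <= j)%N -> (j <= n - 1)%N -> rho j ^+ 2 = rho (j - 1)%N * rho j.+1.
Proof.
move=> rec b_neq0 j le_1j le_jn1.
have rec_j := recurrence le_1j le_jn1.
have rec_nj : a * rho (n - j.+1)%N + b * rho (n - j)%N + c * rho (n - (j - 1))%N = 0.
  have -> : (n - j.+1 = n - j - 1)%N by lia.
  have -> : (n - (j - 1) = (n - j).+1)%N by lia.
  by apply: recurrence; lia.
rewrite !reciprocalV // in rec_nj; try lia.
have rho_jm1_neq0 := reciprocal_neq0 rec (i := (j - 1)%N) ltac:(lia).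
have rho_j_neq0 := reciprocal_neq0 rec (i := j) ltac:(lia).
have rho_jp1_neq0 := reciprocal_neq0 rec (i := j.+1) ltac:(lia).
have : b * (rho j ^+ 2 - rho (j - 1)%N * rho j.+1) = 0.
  rewrite (_ : b * _ = rho j * (a * rho (j - 1)%N + b * rho j + c * rho j.+1)
      - rho (j - 1)%N * rho j * rho j.+1 *
        (a * (rho j.+1)^-1 + b * (rho j)^-1 + c * (rho (j - 1)%N)^-1)).
    by rewrite rec_j rec_nj; ring.
  by field; rewrite rho_jm1_neq0 rho_j_neq0 rho_jp1_neq0.
by move/eqP; rewrite mulf_eq0 (negbTE b_neq0) subr_eq0 => /eqP.
Qed.

End Recurrence.

Lemma sqr_recurrence_geometric : (forall i, (i <= n)%N -> rho i != 0) ->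
    (forall j, (1 <= j)%N -> (j <= n - 1)%N -> rho j ^+ 2 = rho (j - 1)%N * rho j.+1) ->
  forall j, (j < n)%N -> rho j.+1 = rho 1%N / rho 0%N * rho j.
Proof.
move=> rho_neq0 rho_sqr; elim=> [|j IHj] lt_jn; first by rewrite mulfVK ?rho_neq0.
apply: (mulfI (rho_neq0 j ltac:(lia))).
have := rho_sqr j.+1 isT ltac:(lia); rewrite subn1 /= => <-.
by rewrite expr2 {1}IHj; [ring | lia].
Qed.

Lemma constrained_two_step : constrained n rho -> exists2 s, s != 0 & two_step s.
Proof.
move=> [rec [a [b [c [abc_neq0 recurrence]]]]].
have rho_neq0 i : (i <= n)%N -> rho i != 0 := reciprocal_neq0 rec.
have [n1 | n_gt1] := leqP n 1; first by exists 1; [exact: oner_neq0 | move=> i; lia].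
suff [s step] : exists s, two_step s.
  exists s => //; apply: contraNneq (rho_neq0 2%N n_gt1) => s0.
  by rewrite step // s0 mul0r.
have [b0 | b_neq0] := eqVneq b 0.
  exact: (recurrence_b0_two_step recurrence (rho_neq0 0%N isT)).
have rho_succ := sqr_recurrence_geometric rho_neq0
  (reciprocal_recurrence_sqr recurrence rec b_neq0).
exists ((rho 1%N / rho 0%N) ^+ 2) => i le_2i le_in.
have -> : i = (i - 2).+2 by lia.
rewrite 2!subSS subn0 (rho_succ (i - 2)%N.+1); last by lia.
rewrite (rho_succ (i - 2)%N); last by lia.
by rewrite mulrA -expr2.
Qed.

Lemma constrained_parity_geometric : constrained n rho ->
  exists s xi, [/\ s != 0, xi != 0 & parity_geometric s xi].
Proof.
move=> constr; have [s s_neq0 step] := constrained_two_step constr.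
exists s, (rho 0%N); split=> //; first exact: reciprocal_neq0 constr.1 _.
exact: two_step_parity_geometric constr.1 step.
Qed.

Lemma even_terms_parity_geometric :
    even_terms = odd_terms_inv -> geometric even_terms ->
  exists s xi, [/\ s != 0, xi != 0 & parity_geometric s xi].
Proof.
move=> terms_eq [terms_neq0 [r ratio]].
have rho_evenV k : (2 * k <= n)%N -> rho (2 * k)%N = (rho (n - 2 * k)%N)^-1.
  move=> le_2kn; have := congr1 (nth 0 ^~ k) terms_eq.
  by rewrite !nth_mkseq //; lia.
have rho_even_neq0 k : (2 * k <= n)%N -> rho (2 * k)%N != 0.
  move=> le_2kn; have lt_k : (k < n.+1 %/ 2)%N by lia.
  by have := terms_neq0 k; rewrite size_mkseq nth_mkseq //; apply.
have rec : reciprocal.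
  suff rec_even k : (2 * k <= n)%N -> rho (2 * k)%N * rho (n - 2 * k)%N = 1.
    move=> i le_in; have [i_odd | i_even] := boolP (odd i).
      have := rec_even ((n - i) %/ 2)%N ltac:(lia).
      have -> : (2 * ((n - i) %/ 2) = n - i)%N by lia.
      by rewrite subKn // mulrC.
    have := rec_even (i %/ 2)%N ltac:(lia).
    by have -> : (2 * (i %/ 2) = i)%N by lia.
  move=> le_2kn; have := rho_even_neq0 k le_2kn.
  by rewrite rho_evenV // invr_eq0 => rho_odd_neq0; rewrite mulVf.
(* A single even-indexed term leaves the ratio r unconstrained. *)
have [n1 | n_gt1] := leqP n 1.
  exists 1, (rho 0%N); split; [exact: oner_neq0 | exact: rho_even_neq0 0%N _ |].
  by apply: even_step_parity_geometric => // k; lia.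
have step k : (2 * k.+1 <= n)%N -> rho (2 * k.+1)%N = r * rho (2 * k)%N.
  move=> le_2kn; have := ratio k; rewrite size_mkseq !nth_mkseq; [|lia|lia].
  by move=> <-; [rewrite divfK // rho_even_neq0 | ]; lia.
exists r, (rho 0%N); split; last exact: even_step_parity_geometric.
- apply: contraNneq (rho_even_neq0 1%N n_gt1) => r0.
  by rewrite step ?r0 ?mul0r //; lia.
- exact: rho_even_neq0 0%N _.
Qed.

End ParityGeometric.

Theorem proposition11p6 (F : fieldType) (n : nat) (rho : nat -> F)
    (hn1 : (1 <= n)%N) (hnodd : odd n) :
  let evens := mkseq (fun k => rho (2 * k)%N) (n.+1 %/ 2) in
  let odds_inv := mkseq (fun k => (rho (n - 2 * k)%N)^-1) (n.+1 %/ 2) in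
  let form := fun s xi : F =>
    forall i : nat, (i <= n)%N ->
      rho i = if ~~ odd i then xi * s ^+ (i %/ 2)
              else xi^-1 * s ^- ((n - i) %/ 2) in
  [/\ (constrained n rho <-> (evens = odds_inv /\ geometric evens)),
      ((evens = odds_inv /\ geometric evens) <->
         exists s xi : F, [/\ s != 0, xi != 0 & form s xi]) &
      (forall s xi : F, s != 0 -> xi != 0 -> form s xi ->
         (forall i : nat, (2 <= i)%N -> (i <= n)%N -> s = rho i / rho (i - 2)%N)
         /\ xi = rho 0%N)].
Proof.
move=> evens odds_inv form.
have even_terms_iff : evens = odds_inv /\ geometric evens <->
    exists s xi, [/\ s != 0, xi != 0 & parity_geometric n rho s xi].
  split=> [[terms_eq terms_geo] | [s [xi [s_neq0 xi_neq0 rhoE]]]].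
    exact: even_terms_parity_geometric hnodd terms_eq terms_geo.
  exact (parity_geometric_even_terms hnodd s_neq0 xi_neq0 rhoE).
have constrained_iff : constrained n rho <->
    exists s xi, [/\ s != 0, xi != 0 & parity_geometric n rho s xi].
  split=> [|[s [xi [s_neq0 xi_neq0 rhoE]]]]; first exact: constrained_parity_geometric.
  exact (parity_geometric_constrained hnodd s_neq0 xi_neq0 rhoE).
split.
- by rewrite constrained_iff even_terms_iff.
- exact even_terms_iff.
- move=> s xi s_neq0 xi_neq0 rhoE; split.
    exact (parity_geometric_ratio hnodd s_neq0 xi_neq0 rhoE).
  exact (parity_geometric_rho0 rhoE).
Qed.
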